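(* Let $A$ be a finite alphabet, let $d: A^n \to A$ be a block map and fix $x_1 \cdots x_{n-1} \in A^{n-1}$. If $d$ is weakly progressive, then the restriction \[\tau_d: Z(x_1 \cdots x_{n-1}) \to \bigcup_{a \in A} Z(d(x_1 \cdots x_{n-1} a))\] is (well defined and) bijective.
   Context: $A$ is a finite set with the discrete topology; $\mathbb{N}=\{1,2,3,\dots\}$; $A^{\mathbb{N}}$ is the space of one-sided infinite sequences over $A$ with the product topology; $A^k$ is the set of words of length $k$. For a word $\mu$, the cylinder set is $Z(\mu)=\{x\in A^{\mathbb{N}} : x_1\cdots x_{|\mu|}=\mu\}$ (for the empty word this is $A^{\mathbb{N}}$). A block map is a function $d: A^n \to A$, and $\tau_d: A^{\mathbb{N}}\to A^{\mathbb{N}}$ is defined by $\tau_d(x)_i = d(x_i \cdots x_{i+n-1})$. For $w=w_1\cdots w_{n-1}\in A^{n-1}$ and $m\in\mathbb{N}$, define $p_{d,m}^{w}: A^m\to A^m$ by letting, for $\beta\in A^m$, the $j$-th letter ($1\le j\le m$) of $p_{d,m}^{w}(\beta)$ be $d$ applied to the subword of length $n$ starting at position $j$ of the concatenated word $w\beta$ (so $p_{d,m}^{w}(a\alpha)=d(w_1\cdots w_{n-1}a)\,d(w_2\cdots w_{n-1}a\alpha_1)\cdots$). The block map $d$ is weakly progressive of order $m$ if for every $\mu \in A^n$ and every $\nu \in A^m$ with $d(\mu)= \nu_1$ there exists a unique $a \in A$ such that the equation $p_{d,m}^{\mu_1 \cdots \mu_{n-1}}(a \alpha)=\nu$ has a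 solution $\alpha \in A^{m-1}$. The block map $d$ is weakly progressive if it is weakly progressive of order $m$ for some $m\in\mathbb{N}$. *)

From mathcomp Require Import all_boot.
Set Implicit Arguments. Unset Strict Implicit. Unset Printing Implicit Defensive.

(* Conventions: infinite sequences x in A^N are functions nat -> A, with
   the paper's x_1 being x 0 (0-based indexing). Words of length k are
   k.-tuple A. *)

Section Defs.
Variable A : finType.

Definition cyl (k : nat) (mu : k.-tuple A) : (nat -> A) -> Prop :=
  fun x => forall i : 'I_k, x i = tnth mu i.

Definition tau (n : nat) (d : n.-tuple A -> A) (x : nat -> A) : nat -> A :=
  fun i => d [tuple x (i + k) | k < n].

Definition catw (p q : nat) (w : p.-tuple A) (b : q.-tuple A) (i : 'I_(p + q)) : A :=
  match split i with inl j => tnth w j | inr j => tnth b j end.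

Lemma win_lt (n m : nat) (j : 'I_m) (k : 'I_n) : j + k < n.-1 + m.
Proof.
case: j => j /= Hj; case: k => k /= Hk.
have Hk' : k <= n.-1 by case: n Hk.
rewrite addnC -addnS; exact: leq_add.
Qed.

Definition pdm (n m : nat) (d : n.-tuple A -> A) (w : (n.-1).-tuple A)
  (b : m.-tuple A) : m.-tuple A :=
  [tuple d [tuple catw w b (Ordinal (win_lt j k)) | k < n] | j < m].

Definition prefix_word (n : nat) (mu : n.-tuple A) : (n.-1).-tuple A :=
  [tuple tnth mu (widen_ord (leq_pred n) i) | i < n.-1].

(* weakly progressive of order m (m >= 1; order 0 is not allowed since m is
   in N = {1,2,...}) *)
Definition weakly_progressive_of_order (n : nat) (d : n.-tuple A -> A) (m : nat) : Prop :=
  match m with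
  | 0 => False
  | m'.+1 => forall (mu : n.-tuple A) (nu : m'.+1.-tuple A),
      d mu = thead nu ->
      exists! a : A, exists alpha : m'.-tuple A,
        pdm d (prefix_word mu) [tuple of a :: alpha] = nu
  end.

Definition weakly_progressive (n : nat) (d : n.-tuple A -> A) : Prop :=
  exists m, weakly_progressive_of_order d m.

End Defs.

From mathcomp Require Import all_boot.
From Stdlib Require Import FunctionalExtensionality.
Set Implicit Arguments. Unset Strict Implicit. Unset Printing Implicit Defensive.

(* Injectivity: if x and y agree on positions k .. k+n-1 and tau x = tau y, then
   weak progressivity of order m+1, applied to x_k .. x_(k+n) and to the m+1
   letters of tau x from position k, has both x_(k+n) and y_(k+n) as admissible
   first letters, so they coincide and x, y agree one position further.
   Surjectivity: a preimage of y is built greedily, one letter at a time, the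
   state being the last n letters.  The existence half of the condition shows
   that a letter realising y_k can always be chosen so that y_(k+1) can be
   realised next (for order 1 this comes from c |-> d(s c) being injective,
   hence onto since A is finite), so the construction never gets stuck. *)

Section Windows.
Variable A : finType.
Implicit Types (z : nat -> A) (k l : nat).

Definition window z k l : l.-tuple A := map_tuple z (iota_tuple l k).

Lemma tnth_window z k l (i : 'I_l) : tnth (window z k l) i = z (k + i).
Proof. by rewrite tnth_map (tnth_nth 0) nth_iota. Qed.

Lemma window_cons z k l : window z k l.+1 = [tuple of z k :: window z k.+1 l].
Proof. exact: val_inj. Qed.

Lemma window_rcons z k l :
  window z k l.+1 = [tuple of rcons (window z k l) (z (k + l))].
Proof.
apply: val_inj; rewrite /= -map_rcons -cats1 -[[:: k + l]]/(iota (k + l) 1).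
by rewrite -iotaD addn1.
Qed.

Lemma window_nth_catl p q (s : p.-tuple A) (t : q.-tuple A) x0 :
  window (nth x0 (s ++ t)) 0 p = s.
Proof.
apply: val_inj; rewrite /= map_nth_iota0 ?size_cat ?size_tuple ?leq_addr //.
by rewrite take_size_cat ?size_tuple.
Qed.

Lemma window_nth_catr p q (s : p.-tuple A) (t : q.-tuple A) x0 :
  window (nth x0 (s ++ t)) p q = t.
Proof.
apply: val_inj; rewrite /= map_nth_iota ?size_cat ?size_tuple ?addKn //.
by rewrite drop_size_cat ?size_tuple // take_oversize ?size_tuple.
Qed.

Lemma cyl_window n (w : n.-tuple A) z : cyl w z <-> window z 0 n = w.
Proof.
split=> [hw | <- i]; last by rewrite tnth_window.
by apply: eq_from_tnth => i; rewrite tnth_window hw.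
Qed.

Lemma tau_window n (d : n.-tuple A -> A) z k : tau d z k = d (window z k n).
Proof. by congr d; apply: eq_from_tnth => i; rewrite tnth_mktuple tnth_window. Qed.

Definition slide n (s : n.-tuple A) a : n.-tuple A := behead_tuple [tuple of rcons s a].

Lemma slide_window z k l : slide (window z k l) (z (k + l)) = window z k.+1 l.
Proof. by rewrite /slide -window_rcons window_cons; apply: val_inj. Qed.

End Windows.

Section BlockMaps.
Variables (A : finType) (n : nat) (d : n.+1.-tuple A -> A).
Implicit Types (z : nat -> A) (k m : nat).

Lemma catw_window z k p q (i : 'I_(p + q)) :
  catw (window z k p) (window z (k + p) q) i = z (k + i).
Proof. by rewrite /catw; case: splitP => j ->; rewrite tnth_window // addnA. Qed.

Lemma pdm_window z k m :
  pdm d (window z k n) (window z (k + n) m) = window (tau d z) k m.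
Proof.
apply: eq_from_tnth => j; rewrite tnth_mktuple tnth_window tau_window.
by congr d; apply: eq_from_tnth => i; rewrite tnth_mktuple catw_window tnth_window addnA.
Qed.

Lemma pdm_nth_cat (s : n.-tuple A) m (b : m.-tuple A) x0 :
  pdm d s b = window (tau d (nth x0 (s ++ b))) 0 m.
Proof.
have := pdm_window (nth x0 (s ++ b)) 0 m.
by rewrite add0n window_nth_catl window_nth_catr.
Qed.

Lemma prefix_word_rcons (s : n.-tuple A) a : prefix_word [tuple of rcons s a] = s.
Proof.
apply: eq_from_tnth => i; rewrite tnth_mktuple !(tnth_nth a) /= nth_rcons size_tuple.
by rewrite ltn_ord.
Qed.

End BlockMaps.

Section GreedyPreimage.
Variables (A : finType) (n : nat) (d : n.+1.-tuple A -> A) (y : nat -> A).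

Definition fits k (s : n.-tuple A) a := d [tuple of rcons s a] == y k.

Definition viable k (s : n.-tuple A) a :=
  fits k s a && [exists c, fits k.+1 (slide s a) c].

Variable w : n.-tuple A.
Hypothesis viable_exists : forall k s c, fits k s c -> exists a, viable k s a.
Hypothesis fits_start : exists c, fits 0 w c.

Definition next_letter k s := odflt (y 0) [pick a | viable k s a].

Fixpoint state k : n.-tuple A :=
  if k is k'.+1 then slide (state k') (next_letter k' (state k')) else w.

Definition block k : n.+1.-tuple A :=
  [tuple of rcons (state k) (next_letter k (state k))].

Definition preimage i := thead (block i).

Lemma next_letter_viable k s c : fits k s c -> viable k s (next_letter k s).
Proof.
move=> /viable_exists [a ha]; rewrite /next_letter.
by case: pickP => [// | none]; rewrite none in ha.
Qed.

Lemma state_fits k : exists c, fits k (state k) c.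
Proof.
elim: k => [// | k [c hc]].
by have /andP [_ /existsP [c' hc']] := next_letter_viable hc; exists c'.
Qed.

Lemma window_preimage k : window preimage k n.+1 = block k.
Proof.
have nth_block j : forall k, j <= n -> preimage (k + j) = nth (y 0) (block k) j.
  elim: j => [|j IH] k' le_jn; first by rewrite addn0 /preimage /thead (tnth_nth (y 0)).
  rewrite -addSnnS IH 1?ltnW // /= nth_rcons size_tuple le_jn.
  by rewrite -nth_behead.
by apply: eq_from_tnth => i; rewrite tnth_window (tnth_nth (y 0)) nth_block // -ltnS.
Qed.

Lemma cyl_preimage : cyl w preimage.
Proof.
apply/cyl_window; have := window_preimage 0.
by rewrite window_rcons => /(congr1 val) /rcons_inj [hw _]; apply: val_inj.
Qed.

Lemma tau_preimage : tau d preimage = y.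
Proof.
apply: functional_extensionality => k; rewrite tau_window window_preimage.
by have [c /next_letter_viable /andP [/eqP]] := state_fits k.
Qed.

End GreedyPreimage.

Section WeaklyProgressive.
Variables (A : finType) (n : nat) (d : n.+1.-tuple A -> A).

Lemma pdm_head (s : n.-tuple A) m a (alpha : m.-tuple A) :
  thead (pdm d s [tuple of a :: alpha]) = d [tuple of rcons s a].
Proof.
rewrite (pdm_nth_cat _ _ _ a) window_cons theadE tau_window window_rcons.
by rewrite window_nth_catl add0n nth_cat size_tuple ltnn subnn.
Qed.

Lemma order1_rcons_surjective :
  weakly_progressive_of_order d 1 ->
  forall (s : n.-tuple A) v, exists c, d [tuple of rcons s c] = v.
Proof.
move=> wp1 s v.
have inj_rcons : injective (fun c => d [tuple of rcons s c]).
  move=> a b eq_ab.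
  have [a' [_ a'_unique]] :=
    wp1 [tuple of rcons s a] [tuple d [tuple of rcons s a]] erefl.
  have realized c : d [tuple of rcons s c] = d [tuple of rcons s a] ->
      exists alpha : 0.-tuple A,
      pdm d (prefix_word [tuple of rcons s a]) [tuple of c :: alpha]
        = [tuple d [tuple of rcons s a]].
    move=> hc; exists [tuple]; rewrite prefix_word_rcons.
    by apply: eq_from_tnth => j; rewrite (ord1 j) -hc -(pdm_head _ _ (nil_tuple A)).
  by rewrite -(a'_unique a (realized a erefl)) (a'_unique b (realized b (esym eq_ab))).
have [g _ gf] := injF_bij inj_rcons.
by exists (g v); rewrite gf.
Qed.

Variable m : nat.
Hypothesis wp : weakly_progressive_of_order d m.+1.

Lemma wp_next_letter_unique x y k :
  window x k n = window y k n ->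
  window (tau d x) k m.+1 = window (tau d y) k m.+1 -> x (k + n) = y (k + n).
Proof.
move=> eq_xy eq_tau.
have realized z : exists alpha : m.-tuple A, pdm d (prefix_word (window z k n.+1))
    [tuple of z (k + n) :: alpha] = window (tau d z) k m.+1.
  exists (window z (k + n).+1 m).
  by rewrite window_rcons prefix_word_rcons -window_cons pdm_window.
have prefix_xy : prefix_word (window x k n.+1) = prefix_word (window y k n.+1).
  by rewrite !window_rcons !prefix_word_rcons eq_xy.
have head_x : d (window x k n.+1) = thead (window (tau d x) k m.+1).
  by rewrite [in RHS]window_cons theadE tau_window.
have [a [_ a_unique]] := wp head_x.
by rewrite -(a_unique _ (realized x)) (a_unique (y (k + n))) // prefix_xy eq_tau.
Qed.

Lemma tau_inj_cyl (w : n.-tuple A) x y :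
  cyl w x -> cyl w y -> tau d x = tau d y -> x = y.
Proof.
move=> /cyl_window hx /cyl_window hy eq_tau.
suff agree k : forall i, i < n + k -> x i = y i.
  apply: functional_extensionality => i; apply: (agree i.+1).
  by rewrite addnS ltnS leq_addl.
elim: k => [|k IH] i.
  rewrite addn0 => lt_in.
  have := congr1 (fun t => tnth t (Ordinal lt_in)) (etrans hx (esym hy)).
  by rewrite !tnth_window.
rewrite addnS ltnS leq_eqVlt => /predU1P [-> | /IH //].
rewrite addnC; apply: wp_next_letter_unique; last by rewrite eq_tau.
apply: eq_from_tnth => j; rewrite !tnth_window; apply: IH.
by rewrite addnC ltn_add2r.
Qed.

Lemma wp_viable_exists y k (s : n.-tuple A) c :
  fits d y k s c -> exists a, viable d y k s a.
Proof.
move=> /eqP fit_c.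
have head_c : d [tuple of rcons s c] = thead (window y k m.+1).
  by rewrite window_cons theadE fit_c.
have [a [[alpha]]] := wp head_c.
rewrite prefix_word_rcons (pdm_nth_cat _ _ _ a) => tau_z _.
set z := nth a _ in tau_z.
have z_s : window z 0 n = s by apply: window_nth_catl.
have z_a : z n = a.
  have := congr1 (fun t => thead t) (window_nth_catr s [tuple of a :: alpha] a).
  by rewrite window_cons.
exists a; apply/andP; split.
  apply/eqP; have := congr1 (fun t => thead t) tau_z.
  by rewrite !window_cons !theadE tau_window window_rcons z_s add0n z_a.
apply/existsP; case: m wp alpha z tau_z z_s z_a => [|m'] wp' alpha z tau_z z_s z_a.
  have [c' fit_c'] := order1_rcons_surjective wp' (slide s a) (y k.+1).
  by exists c'; apply/eqP.
have tau_z1 : tau d z 1 = y k.+1.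
  have := congr1 (fun t => tnth t (lift ord0 ord0)) tau_z.
  by rewrite !tnth_window => ->; rewrite addn1.
exists (z n.+1); apply/eqP.
by rewrite -tau_z1 tau_window window_rcons -z_s -z_a (slide_window z 0 n).
Qed.

Lemma tau_surj_cyl (w : n.-tuple A) y a :
  y 0 = d [tuple of rcons w a] -> exists x, cyl w x /\ tau d x = y.
Proof.
move=> y0; have fits_start : exists c, fits d y 0 w c by exists a; rewrite /fits y0.
exists (preimage d y w); split.
  exact: cyl_preimage.
exact: tau_preimage (@wp_viable_exists y) fits_start.
Qed.

End WeaklyProgressive.

Lemma cyl1 (A : finType) (v : A) (y : nat -> A) : cyl [tuple v] y <-> y 0 = v.
Proof. by split=> [/(_ ord0) // | y0 i]; rewrite (ord1 i). Qed.

Theorem proposition3p10 (A : finType) (n : nat) (d : n.+1.-tuple A -> A)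
  (w : n.-tuple A) :
  weakly_progressive d ->
  let U := fun y : nat -> A =>
    exists a : A, cyl [tuple d [tuple of rcons w a]] y in
  (forall x, cyl w x -> U (tau d x)) /\
  (forall x y, cyl w x -> cyl w y -> tau d x = tau d y -> x = y) /\
  (forall y, U y -> exists x, cyl w x /\ tau d x = y).
Proof.
case=> -[// | m] wp U; split; [|split].
- move=> x /cyl_window hx; exists (x n); apply/cyl1.
  by rewrite tau_window window_rcons hx.
- by move=> x y; apply: (tau_inj_cyl wp).
- by move=> y [a /cyl1 y0]; apply: (tau_surj_cyl wp y0).
Qed.
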